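(* Let $E$ and $E'$ be disjunctive interval multiplicity expressions (DIMEs) over a finite alphabet $\Sigma$. Then $L(E)=L(E')$ if and only if $\Delta_E=\Delta_{E'}$.
   Context: Unordered words are functions $w:\Sigma\to\mathbb{N}_0$; $a\in w$ means $w(a)\neq 0$; $\varepsilon$ is the all-zero word; unordered concatenation $\uplus$ is multiset union, extended to languages pointwise. An interval is $[n,m]$ or $[n,m]^?$ with $n\in\mathbb{N}_0$, $m\in\mathbb{N}_0\cup\{\infty\}$; $L(E^{[n,m]})=\{w_1\uplus\dots\uplus w_i\mid n\le i\le m, w_j\in L(E)\}$, $L(E^{[n,m]^?})=L(E^{[n,m]})\cup\{\varepsilon\}$; the multiplicities $*,+,?,1$ denote $[0,\infty],[1,\infty],[0,1],[1,1]$. Also $L(a)=\{a\}$, $L(E_1\mid E_2)=L(E_1)\cup L(E_2)$, $L(E_1\mathbin{|\hspace{-0.1em}|} E_2)=L(E_1)\uplus L(E_2)$. An atom is $(a_1^{I_1}\mathbin{|\hspace{-0.1em}|}\dots\mathbin{|\hspace{-0.1em}|} a_k^{I_k})$ with $a_i\in\Sigma$ and each $I_i\in\{?,1\}$. A clause is $(A_1^{I_1}\mid\dots\mid A_k^{I_k})$ with atoms $A_i$ and intervals $I_i$; it is simple if each $I_i\in\{?,1\}$. A DIME is $(D_1^{I_1}\mathbin{|\hspace{-0.1em}|}\dots\mathbin{|\hspace{-0.1em}|} D_k^{I_k})$ where for each $i$ either $D_i$ is a simple clause and $I_i\in\{+,*\}$, or $D_i$ is a clause and $I_i\in\{1,?\}$;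 moreover each symbol occurs at most once in the DIME. The characterizing tuple of a DIME $E$ is $\Delta_E=(C_E,N_E,P_E,K_E)$ where $C_E=\{(a,b)\in\Sigma\times\Sigma\mid \neg\exists w\in L(E).\ a\in w\wedge b\in w\}$, $N_E=\{(a,w(a))\mid a\in\Sigma, w\in L(E)\}$, $P_E=\{X\subseteq\Sigma\mid\forall w\in L(E).\ \exists a\in X.\ a\in w\}$, $K_E=\{(a,b)\in\Sigma\times\Sigma\mid\forall w\in L(E).\ w(a)\ge w(b)\}$. *)

From Stdlib Require List.
From mathcomp Require Import all_boot.
Set Implicit Arguments. Unset Strict Implicit. Unset Printing Implicit Defensive.

Section DIME.
Variable Sigma : finType.

(* Unordered words: functions Sigma -> nat (finite functions). *)
Definition word := {ffun Sigma -> nat}.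
Definition lang := word -> Prop.

Definition eps : word := [ffun _ => 0].
Definition wplus (w1 w2 : word) : word := [ffun a => w1 a + w2 a].
Definition wsym (a : Sigma) : word := [ffun b => nat_of_bool (b == a)].

Definition lconc (L1 L2 : lang) : lang :=
  fun w => exists w1 w2, L1 w1 /\ L2 w2 /\ w = wplus w1 w2.
Definition leps : lang := fun w => w = eps.

Fixpoint lpow (L : lang) (i : nat) : lang :=
  match i with 0 => leps | i'.+1 => lconc L (lpow L i') end.

(* Intervals [n,m] (iopt = false) and [n,m]^? (iopt = true); ihi = None is infinity. *)
Record interval := Interval { ilo : nat; ihi : option nat; iopt : bool }.

Definition interval_wf (I : interval) : Prop :=
  match ihi I with Some m => ilo I <= m | None => True end.

Definition mult_star := Interval 0 None false.
Definition mult_plus := Interval 1 None false.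
Definition mult_qm   := Interval 0 (Some 1) false.
Definition mult_one  := Interval 1 (Some 1) false.

Definition lmult (L : lang) (I : interval) : lang :=
  fun w => (exists i, ilo I <= i /\
                      (match ihi I with Some m => i <= m | None => True end) /\
                      lpow L i w)
           \/ (iopt I = true /\ w = eps).

(* An atom (a_1^{I_1} || ... || a_k^{I_k}); a clause (A_1^{I_1} | ... | A_k^{I_k});
   a DIME (D_1^{I_1} || ... || D_k^{I_k}). *)
Definition atom := seq (Sigma * interval).
Definition clause := seq (atom * interval).
Definition dime := seq (clause * interval).

Definition L_atom (A : atom) : lang :=
  foldr (fun p L => lconc (lmult (fun w => w = wsym p.1) p.2) L) leps A.
Definition L_clause (D : clause) : lang :=
  fun w => exists2 p, List.In p D & lmult (L_atom p.1) p.2 w.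
Definition L_dime (E : dime) : lang :=
  foldr (fun p L => lconc (lmult (L_clause p.1) p.2) L) leps E.

Definition atom_ok (A : atom) : Prop :=
  A <> [::] /\ forall p, List.In p A -> p.2 = mult_qm \/ p.2 = mult_one.
Definition clause_ok (D : clause) : Prop :=
  D <> [::] /\ forall p, List.In p D -> atom_ok p.1 /\ interval_wf p.2.
Definition simple_clause (D : clause) : Prop :=
  clause_ok D /\ forall p, List.In p D -> p.2 = mult_qm \/ p.2 = mult_one.

Definition dime_symbols (E : dime) : seq Sigma :=
  flatten [seq flatten [seq [seq q.1 | q <- p.1] | p <- c.1] | c <- E].

Definition is_dime (E : dime) : Prop :=
  E <> [::] /\
  (forall c, List.In c E ->
     (simple_clause c.1 /\ (c.2 = mult_plus \/ c.2 = mult_star)) \/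
     (clause_ok c.1 /\ (c.2 = mult_one \/ c.2 = mult_qm))) /\
  uniq (dime_symbols E).

(* Characterizing tuple Delta_E = (C_E, N_E, P_E, K_E), as predicates. *)
Definition C_E (E : dime) (a b : Sigma) : Prop :=
  ~ (exists w, L_dime E w /\ w a <> 0 /\ w b <> 0).
Definition N_E (E : dime) (a : Sigma) (n : nat) : Prop :=
  exists w, L_dime E w /\ w a = n.
Definition P_E (E : dime) (X : {set Sigma}) : Prop :=
  forall w, L_dime E w -> exists a, a \in X /\ w a <> 0.
Definition K_E (E : dime) (a b : Sigma) : Prop :=
  forall w, L_dime E w -> w b <= w a.

Definition same_delta (E E' : dime) : Prop :=
  (forall a b, C_E E a b <-> C_E E' a b) /\
  (forall a n, N_E E a n <-> N_E E' a n) /\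
  (forall X, P_E E X <-> P_E E' X) /\
  (forall a b, K_E E a b <-> K_E E' a b).

Definition same_lang (E E' : dime) : Prop :=
  forall w, L_dime E w <-> L_dime E' w.

End DIME.

From mathcomp Require Import all_boot zify.
From Stdlib Require Import Classical.
Set Implicit Arguments. Unset Strict Implicit. Unset Printing Implicit Defensive.

(* A word [w] lies in L(E) iff it is consistent with Delta_E: every count [w a] is
   realised in L(E) (N), [w] contains no pair excluded by C, meets every set of P
   and respects every inequality of K.
   Consistency suffices by induction along the DIME: its clauses use disjoint
   letters, so consistency with the tuple of a concatenation restricts to each
   factor.  In a clause taken at most once, C confines a consistent word to one
   atom, K forces the mandatory letters of that atom to a common count k bounding
   all its letters, and N places k in the atom's interval.  In an iterated clause,
   K alone splits the word into powers of its atoms. *)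

Lemma uniq_cat_disjoint (T : finType) (s1 s2 : seq T) :
  uniq (s1 ++ s2) -> [disjoint s1 & s2].
Proof. by rewrite cat_uniq disjoint_sym disjoint_has => /and3P[]. Qed.

Lemma mem_flatten_map (T : Type) (U : eqType) (f : T -> seq U) l a :
  a \in flatten (map f l) <-> exists2 p, List.In p l & a \in f p.
Proof.
elim: l => [|p l IHl] /=; first by split=> // -[].
rewrite mem_cat; split=> [/orP[af|/IHl[r lr ar]]|[r [<-|lr] ar]].
- by exists p; [left|].
- by exists r; [right|].
- by rewrite ar.
- by apply/orP; right; apply/IHl; exists r.
Qed.

Lemma uniq_flatten_map_inj (T : Type) (U : eqType) (f : T -> seq U) l p r a :
  uniq (flatten (map f l)) -> List.In p l -> List.In r l ->
  a \in f p -> a \in f r -> p = r.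
Proof.
elim: l => [|x l IHl] //=; rewrite cat_uniq => /and3P[_ fx_l ul].
have notin_l y : List.In y l -> a \in f y -> a \in f x -> False.
  move=> ly ay ax; move/hasP: fx_l; apply; exists a => //.
  by apply/mem_flatten_map; exists y.
move=> [<-|lp] [<-|lr] ap ar //; first [exact: IHl | by case: (notin_l _ lr ar ap)
  | by case: (notin_l _ lp ap ar)].
Qed.

Lemma uniq_flatten_map_in (T : Type) (U : eqType) (f : T -> seq U) l p :
  uniq (flatten (map f l)) -> List.In p l -> uniq (f p).
Proof.
elim: l => [|x l IHl] //=; rewrite cat_uniq => /and3P[ux _ ul].
by move=> [<-|lp] //; apply: IHl.
Qed.

Section Languages.
Variable Sigma : finType.
Local Notation word := (word Sigma).
Local Notation lang := (lang Sigma).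
Local Notation eps := (eps Sigma).

Lemma wplusC (w1 w2 : word) : wplus w1 w2 = wplus w2 w1.
Proof. by apply/ffunP=> s; rewrite !ffunE addnC. Qed.

Lemma wplusA (w1 w2 w3 : word) : wplus w1 (wplus w2 w3) = wplus (wplus w1 w2) w3.
Proof. by apply/ffunP=> s; rewrite !ffunE addnA. Qed.

Lemma wplusw0 (w : word) : wplus w eps = w.
Proof. by apply/ffunP=> s; rewrite !ffunE addn0. Qed.

Lemma wplus0w (w : word) : wplus eps w = w.
Proof. by apply/ffunP=> s; rewrite !ffunE. Qed.

Lemma neq_eps_letter (w : word) : w <> eps -> exists a, w a <> 0.
Proof.
move=> w_neq0; apply: NNPP => /(_ _) all0; apply: w_neq0; apply/ffunP=> a.
by rewrite ffunE; apply: NNPP => wa; apply: all0; exists a.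
Qed.

Definition plus_closed (Q : word -> Prop) :=
  Q eps /\ forall w1 w2, Q w1 -> Q w2 -> Q (wplus w1 w2).

Lemma lpow_closed (Q : word -> Prop) (L : lang) i :
  plus_closed Q -> (forall w, L w -> Q w) -> forall w, lpow L i w -> Q w.
Proof.
move=> [Qeps Qplus] LQ; elim: i => [|i IHi] w /=; first by move=> ->.
by move=> [w1 [w2 [Lw1 [Lw2 ->]]]]; apply: Qplus; [apply: LQ | apply: IHi].
Qed.

Lemma lmult_closed (Q : word -> Prop) (L : lang) I :
  plus_closed Q -> (forall w, L w -> Q w) -> forall w, lmult L I w -> Q w.
Proof.
move=> Qcl LQ w [[i [_ [_ Lw]]]|[_ ->]]; [exact: lpow_closed Lw | exact: Qcl.1].
Qed.

Definition supp (S : seq Sigma) (w : word) := forall a, a \notin S -> w a = 0.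

Lemma supp_plus_closed S : plus_closed (supp S).
Proof.
split=> [a _|w1 w2 S1 S2 a aS]; first by rewrite ffunE.
by rewrite ffunE S1 // S2.
Qed.

Lemma supp_cat S1 S2 w1 w2 :
  supp S1 w1 -> supp S2 w2 -> supp (S1 ++ S2) (wplus w1 w2).
Proof.
move=> S1w1 S2w2 a; rewrite mem_cat negb_or => /andP[aS1 aS2].
by rewrite ffunE S1w1 // S2w2.
Qed.

Definition restr (S : seq Sigma) (w : word) : word :=
  [ffun a => if a \in S then w a else 0].

Lemma restr_supp S w : supp S (restr S w).
Proof. by move=> a aS; rewrite ffunE (negbTE aS). Qed.

Lemma restrE S w a : a \in S -> restr S w a = w a.
Proof. by move=> aS; rewrite ffunE aS. Qed.

Lemma restr_split S1 S2 w : [disjoint S1 & S2] -> supp (S1 ++ S2) w ->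
  w = wplus (restr S1 w) (restr S2 w).
Proof.
move=> S12 Sw; apply/ffunP=> a; rewrite !ffunE.
case: (boolP (a \in S1)) => [aS1|aS1]; first by rewrite (disjointFr S12 aS1) addn0.
by case: ifP => aS2 //; apply: Sw; rewrite mem_cat negb_or aS1 aS2.
Qed.

Lemma restr_wplus S1 S2 w1 w2 : [disjoint S1 & S2] ->
  supp S1 w1 -> supp S2 w2 -> restr S1 (wplus w1 w2) = w1.
Proof.
move=> S12 S1w1 S2w2; apply/ffunP=> a; rewrite !ffunE.
case: ifP => [aS1|/negbT aS1]; last by rewrite S1w1.
by rewrite S2w2 ?addn0 // (disjointFr S12 aS1).
Qed.

Lemma lconcC (L1 L2 : lang) w : lconc L1 L2 w -> lconc L2 L1 w.
Proof. by move=> [w1 [w2 [L1w1 [L2w2 ->]]]]; exists w2, w1; rewrite wplusC. Qed.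

Section DisjointConcatenation.
Variables (L1 L2 : lang) (S1 S2 : seq Sigma).
Hypothesis L1S1 : forall w, L1 w -> supp S1 w.
Hypothesis L2S2 : forall w, L2 w -> supp S2 w.
Hypothesis S12 : [disjoint S1 & S2].

Lemma lconc_supp w : lconc L1 L2 w -> supp (S1 ++ S2) w.
Proof.
by move=> [w1 [w2 [L1w1 [L2w2 ->]]]]; apply: supp_cat; [apply: L1S1 | apply: L2S2].
Qed.

Lemma lconc_disjointP w :
  lconc L1 L2 w <-> [/\ supp (S1 ++ S2) w, L1 (restr S1 w) & L2 (restr S2 w)].
Proof.
split=> [Lw|[Sw L1w L2w]]; last first.
  by exists (restr S1 w), (restr S2 w); split=> //; split=> //; apply: restr_split.
have Sw := lconc_supp Lw.
case: Lw Sw => w1 [w2 [L1w1 [L2w2 ->]]] Sw; split=> //.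
  by rewrite (restr_wplus S12 (L1S1 L1w1) (L2S2 L2w2)).
by rewrite wplusC (restr_wplus _ (L2S2 L2w2) (L1S1 L1w1)) // disjoint_sym.
Qed.

End DisjointConcatenation.

Lemma lpow1 (L : lang) w : lpow L 1 w <-> L w.
Proof.
split=> [[w1 [w2 [Lw1 [-> ->]]]]|Lw]; first by rewrite wplusw0.
by exists w, eps; rewrite wplusw0.
Qed.

Lemma lmult_one (L : lang) w : lmult L mult_one w <-> L w.
Proof.
split=> [[[i [/= i_ge1 [i_le1 Lw]]]|[//]]|Lw].
  by case: i i_ge1 i_le1 Lw => [|[|i]] // _ _ /lpow1.
by left; exists 1; split=> //; split=> //; apply/lpow1.
Qed.

Lemma lmult_qm (L : lang) w : lmult L mult_qm w <-> w = eps \/ L w.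
Proof.
split=> [[[i [_ [/= i_le1 Lw]]]|[//]]|[->|Lw]].
- by case: i i_le1 Lw => [|[|i]] // _ => [|/lpow1]; [left | right].
- by left; exists 0.
- by left; exists 1; split=> //; split=> //; apply/lpow1.
Qed.

Definition qm_or_one (I : interval) := I = mult_qm \/ I = mult_one.

Lemma mem_lmult_qm_or_one (L : lang) I w : qm_or_one I -> L w -> lmult L I w.
Proof. by case=> -> Lw; [apply/lmult_qm; right | apply/lmult_one]. Qed.

Lemma lmult_qm_or_one_eps (L : lang) I w : qm_or_one I -> lmult L I w -> w = eps \/ L w.
Proof. by case=> -> => [/lmult_qm | /lmult_one]; [|right]. Qed.

Lemma lpow_mono (L L' : lang) i : (forall w, L w -> L' w) ->
  forall w, lpow L i w -> lpow L' i w.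
Proof.
move=> LL'; elim: i => [|i IHi] w //= [w1 [w2 [Lw1 [Lw2 ->]]]].
by exists w1, w2; split; [apply: LL' | split; [apply: IHi |]].
Qed.

Lemma lpow_add (L : lang) i j w1 w2 :
  lpow L i w1 -> lpow L j w2 -> lpow L (i + j) (wplus w1 w2).
Proof.
elim: i w1 => [|i IHi] w1 /=; first by rewrite /leps => ->; rewrite wplus0w.
move=> [u [v [Lu [Lv ->]]]] Lw2; exists u, (wplus v w2).
by rewrite wplusA; split=> //; split=> //; apply: IHi.
Qed.

Definition C_lang (L : lang) a b := ~ (exists w, L w /\ w a <> 0 /\ w b <> 0).
Definition N_lang (L : lang) a n := exists w, L w /\ w a = n.
Definition P_lang (L : lang) (X : {set Sigma}) :=
  forall w, L w -> exists a, a \in X /\ w a <> 0.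
Definition K_lang (L : lang) a b := forall w, L w -> w b <= w a.

Definition delta_sat (L : lang) (w : word) :=
  [/\ forall a, N_lang L a (w a),
      forall a b, C_lang L a b -> ~ (w a <> 0 /\ w b <> 0),
      forall X, P_lang L X -> exists a, a \in X /\ w a <> 0
    & forall a b, K_lang L a b -> w b <= w a].

Lemma delta_sat_mem (L : lang) w : L w -> delta_sat L w.
Proof.
move=> Lw; split=> [a|a b CLab [wa wb]|X|a b]; first by exists w.
- by apply: CLab; exists w.
- exact.
- exact.
Qed.

Lemma delta_sat_ext (L L' : lang) w :
  (forall w, L w -> L' w) -> (forall w, L' w -> L w) -> delta_sat L w -> delta_sat L' w.
Proof.
move=> LL' L'L [Nw Cw Pw Kw]; split=> [a|a b CLab|X PLX|a b KLab].
- by have [w' [Lw' <-]] := Nw a; exists w'; split=> //; apply: LL'.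
- by apply: Cw => -[w' [/LL' L'w' w'ab]]; apply: CLab; exists w'.
- by apply: Pw => w' /LL'; apply: PLX.
- by apply: Kw => w' /LL'; apply: KLab.
Qed.

Section SupportedLanguage.
Variables (L : lang) (S : seq Sigma).
Hypothesis LS : forall w, L w -> supp S w.

Lemma delta_sat_supp w : delta_sat L w -> supp S w.
Proof. by move=> [Nw _ _ _] a aS; have [w' [/LS Sw' <-]] := Nw a; apply: Sw'. Qed.

(* Were [eps] not in [L], [S] would be in [P_L]. *)
Lemma delta_sat_eps : delta_sat L eps -> L eps.
Proof.
move=> [_ _ Peps _]; apply: NNPP => Leps.
have PS : P_lang L [set a | a \in S].
  move=> w Lw; have [a wa] : exists a, w a <> 0.
    by apply: neq_eps_letter => w_eps; apply: Leps; rewrite -w_eps.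
  by exists a; rewrite inE; split=> //; apply: contraT => /(LS Lw).
by have [a [_]] := Peps _ PS; rewrite ffunE.
Qed.

End SupportedLanguage.

Section DeltaConcatenation.
Variables (L1 L2 : lang) (S1 S2 : seq Sigma).
Hypothesis L1S1 : forall w, L1 w -> supp S1 w.
Hypothesis L2S2 : forall w, L2 w -> supp S2 w.
Hypothesis S12 : [disjoint S1 & S2].

Let restr_lconc w : lconc L1 L2 w -> L1 (restr S1 w).
Proof. by case/(lconc_disjointP L1S1 L2S2 S12). Qed.

Lemma delta_sat_restr w : delta_sat (lconc L1 L2) w -> delta_sat L1 (restr S1 w).
Proof.
move=> [Nw Cw Pw Kw]; split=> [a|a b CLab|X PLX|a b KLab].
- have [w' [Lw' w'a]] := Nw a; exists (restr S1 w'); split; first exact: restr_lconc.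
  by rewrite !ffunE w'a.
- rewrite !ffunE; case: ifP => aS1; last by case.
  case: ifP => bS1; last by case.
  apply: Cw => -[w' [Lw' [w'a w'b]]]; apply: CLab.
  by exists (restr S1 w'); rewrite !restrE //; split=> //; apply: restr_lconc.
- have PX1 : P_lang (lconc L1 L2) (X :&: [set a | a \in S1]).
    move=> w' /restr_lconc /PLX [a [aX]]; rewrite ffunE.
    by case: ifP => // aS1 w'a; exists a; rewrite !inE aX aS1.
  have [a [/setIP [aX]]] := Pw _ PX1; rewrite inE => aS1 wa.
  by exists a; rewrite restrE.
- rewrite !ffunE; case: ifP => bS1 //; case: ifP => aS1.
    by apply: Kw => w' /restr_lconc /KLab; rewrite !restrE.
  have [w' [/restr_lconc /KLab Kw' <-]] := Nw b.
  by move: Kw'; rewrite !ffunE aS1 bS1.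
Qed.

End DeltaConcatenation.

Lemma delta_sat_lconc (L1 L2 : lang) S1 S2 w :
  (forall w, L1 w -> supp S1 w) -> (forall w, L2 w -> supp S2 w) -> [disjoint S1 & S2] ->
  (forall w, delta_sat L1 w -> L1 w) -> (forall w, delta_sat L2 w -> L2 w) ->
  delta_sat (lconc L1 L2) w -> lconc L1 L2 w.
Proof.
move=> L1S1 L2S2 S12 L1sat L2sat sat_w; apply/(lconc_disjointP L1S1 L2S2 S12); split.
- exact: (delta_sat_supp (lconc_supp L1S1 L2S2) sat_w).
- exact/L1sat/(delta_sat_restr L1S1 L2S2 S12).
- apply/L2sat/(delta_sat_restr L2S2 L1S1); first by rewrite disjoint_sym.
  by apply: delta_sat_ext sat_w; apply: lconcC.
Qed.

Definition atom_symbols (A : atom Sigma) : seq Sigma := [seq q.1 | q <- A].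

Lemma atom_symbolsP (A : atom Sigma) a :
  a \in atom_symbols A <-> exists2 q, List.In q A & a = q.1.
Proof.
elim: A a => [|p A IHA] a /=; first by split=> // -[].
rewrite inE; split=> [/orP[/eqP->|/IHA[q Aq ->]]|[q [<-|Aq] ->]].
- by exists p; [left|].
- by exists q; [right|].
- by rewrite eqxx.
- by apply/orP; right; apply/IHA; exists q.
Qed.

Lemma mem_atom_symbols (A : atom Sigma) q : List.In q A -> q.1 \in atom_symbols A.
Proof. by move=> Aq; apply/atom_symbolsP; exists q. Qed.

Definition letter_bound i (q : Sigma * interval) (w : word) :=
  w q.1 <= i /\ (q.2 = mult_one -> w q.1 = i).

Definition atom_power (A : atom Sigma) i w :=
  supp (atom_symbols A) w /\ forall q, List.In q A -> letter_bound i q w.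

Lemma atom_power_le A i w a : atom_power A i w -> a \in atom_symbols A -> w a <= i.
Proof. by move=> [_ bw] /atom_symbolsP[q Aq ->]; case: (bw q Aq). Qed.

Lemma supp1_eq a (u v : word) : supp [:: a] u -> supp [:: a] v -> u a = v a -> u = v.
Proof.
move=> Su Sv uva; apply/ffunP=> b; case: (eqVneq b a) => [->|ba] //.
by rewrite Su ?Sv // inE.
Qed.

Lemma lmult_wsymP q u : qm_or_one q.2 ->
  lmult (fun u => u = wsym q.1) q.2 u <-> supp [:: q.1] u /\ letter_bound 1 q u.
Proof.
have Seps : supp [:: q.1] eps by move=> b _; rewrite ffunE.
have Ssym : supp [:: q.1] (wsym q.1) by move=> b; rewrite ffunE inE => /negbTE->.
have sym1 : wsym q.1 q.1 = 1 by rewrite ffunE eqxx.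
rewrite /letter_bound; case=> ->; rewrite ?lmult_qm ?lmult_one.
  split=> [[->|->]|[Su [u1 _]]]; first by rewrite ffunE.
    by rewrite sym1.
  move: u1; rewrite leq_eqVlt ltnS leqn0 => /orP[]/eqP uq.
    by right; apply: supp1_eq Su Ssym _; rewrite sym1.
  by left; apply: supp1_eq Su Seps _; rewrite ffunE.
split=> [->|[Su [_ /(_ erefl) uq]]]; first by rewrite sym1.
by apply: supp1_eq Su Ssym _; rewrite sym1.
Qed.

Lemma letter_bound_restr S i q w :
  q.1 \in S -> letter_bound i q (restr S w) <-> letter_bound i q w.
Proof. by move=> qS; rewrite /letter_bound restrE. Qed.

Lemma letter_bound_wplus i j q w1 w2 :
  letter_bound i q w1 -> letter_bound j q w2 -> letter_bound (i + j) q (wplus w1 w2).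
Proof.
rewrite /letter_bound ffunE => -[le1 eq1] [le2 eq2]; split=> [|q1]; first lia.
by rewrite eq1 // eq2.
Qed.

Lemma atom_power_restr A i w :
  atom_power A i (restr (atom_symbols A) w) <->
  forall q, List.In q A -> letter_bound i q w.
Proof.
have bound_restr q : List.In q A ->
    letter_bound i q (restr (atom_symbols A) w) <-> letter_bound i q w.
  by move=> Aq; apply/letter_bound_restr/mem_atom_symbols.
split=> [[_ bw] q Aq|bw]; first by apply/bound_restr/bw.
by split=> [|q Aq]; [apply: restr_supp | apply/bound_restr/bw].
Qed.

Lemma L_atom_supp A w : L_atom A w -> supp (atom_symbols A) w.
Proof.
elim: A w => [|p A IHA] w /=; first by move=> -> a _; rewrite ffunE.
have Ssym : forall u, lmult (fun u => u = wsym p.1) p.2 u -> supp [:: p.1] u.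
  apply: (lmult_closed (supp_plus_closed _)) => _ -> a.
  by rewrite ffunE inE => /negbTE->.
exact: lconc_supp Ssym IHA w.
Qed.

Lemma L_atomP A w : (forall q, List.In q A -> qm_or_one q.2) ->
  uniq (atom_symbols A) -> L_atom A w <-> atom_power A 1 w.
Proof.
elim: A w => [|p A IHA] w okA.
  split=> [->|[Sw _]]; first by split=> // b _; rewrite ffunE.
  by apply/ffunP=> b; rewrite ffunE Sw.
rewrite [atom_symbols _]/= cons_uniq => /andP[pA uA].
have {}IHA u := IHA u (fun q Aq => okA q (or_intror Aq)) uA.
have Lsupp u : L_atom A u -> supp (atom_symbols A) u by case/IHA.
have okp := okA p (or_introl erefl).
have Ssym u : lmult (fun u => u = wsym p.1) p.2 u -> supp [:: p.1] u.
  by case/(lmult_wsymP _ okp).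
have pA' : [disjoint [:: p.1] & atom_symbols A].
  by apply: uniq_cat_disjoint; rewrite /= pA.
have p1 : p.1 \in [:: p.1] := mem_head _ _.
rewrite [L_atom _ _]/= (lconc_disjointP Ssym Lsupp pA').
split=> [[Sw /(lmult_wsymP _ okp) [_ /(letter_bound_restr _ _ p1) bp]
           /IHA/atom_power_restr bA]|[Sw bw]].
  by split=> // q [<-|Aq]; [apply: bp | apply: bA].
split=> //; last by apply/IHA/atom_power_restr => q Aq; apply: bw; right.
apply/(lmult_wsymP _ okp); split; first exact: restr_supp.
by apply/(letter_bound_restr _ _ p1)/bw; left.
Qed.

Lemma lpow_atomP A i w : (forall q, List.In q A -> qm_or_one q.2) ->
  uniq (atom_symbols A) -> lpow (L_atom A) i w <-> atom_power A i w.
Proof.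
move=> okA uA; elim: i w => [|i IHi] w /=.
  split=> [->|[Sw bw]]; first by split=> [b _|q _]; rewrite /letter_bound ffunE.
  apply/ffunP=> a; rewrite ffunE; case: (boolP (a \in atom_symbols A)); last exact: Sw.
  by case/atom_symbolsP=> q Aq ->; have [] := bw q Aq; rewrite leqn0 => /eqP.
split=> [[w1 [w2 [/(L_atomP _ okA uA) [S1 b1] [/IHi [S2 b2] ->]]]]|[Sw bw]].
  split=> [|q Aq]; first exact: (supp_plus_closed _).2.
  exact: letter_bound_wplus (b1 q Aq) (b2 q Aq).
(* peel one copy of the atom off every letter present in [w] *)
exists [ffun a => minn (w a) 1], [ffun a => (w a).-1].
split; last split.
- apply/(L_atomP _ okA uA); split=> [a aA|q Aq]; first by rewrite ffunE Sw.
  by have [le one] := bw q Aq; rewrite /letter_bound ffunE; split=> [|/one ->]; lia.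
- apply/IHi; split=> [a aA|q Aq]; first by rewrite ffunE Sw.
  by have [le one] := bw q Aq; rewrite /letter_bound ffunE; split=> [|/one ->]; lia.
- by apply/ffunP=> a; rewrite !ffunE; lia.
Qed.

Definition in_interval (I : interval) i :=
  ilo I <= i /\ match ihi I with Some m => i <= m | None => True end.

Lemma lmult_atomP A I w : (forall q, List.In q A -> qm_or_one q.2) ->
  uniq (atom_symbols A) ->
  lmult (L_atom A) I w <->
  (exists2 i, in_interval I i & atom_power A i w) \/ (iopt I /\ w = eps).
Proof.
move=> okA uA; split=> [[[i [lo [hi /(lpow_atomP _ _ okA uA) Aw]]]|eps_w]|].
- by left; exists i.
- by right.
by case=> [[i [lo hi] /(lpow_atomP _ _ okA uA) Aw]|eps_w]; [left; exists i | right].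
Qed.

Lemma atom_power_max A d w : supp (atom_symbols A) w ->
  (forall q, List.In q A -> q.2 = mult_one ->
     d <= w q.1 /\ forall a, a \in atom_symbols A -> w a <= w q.1) ->
  atom_power A (maxn d (\max_(a <- atom_symbols A) w a)) w.
Proof.
move=> Sw req; split=> // q Aq.
have q_le_max : w q.1 <= \max_(a <- atom_symbols A) w a.
  exact: (leq_bigmax_seq (P := predT) _ (mem_atom_symbols Aq)).
split=> [|q1]; first by rewrite leq_max q_le_max orbT.
have [dq maxq] := req q Aq q1; apply/eqP; rewrite eqn_leq geq_max dq leq_max q_le_max orbT.
by apply/bigmax_leqP_seq => a aA _; apply: maxq.
Qed.

Definition clause_symbols (c : clause Sigma) := flatten [seq atom_symbols p.1 | p <- c].

Lemma L_clause_supp c w : L_clause c w -> supp (clause_symbols c) w.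
Proof.
move=> [q cq Lw] a ac; apply: (lmult_closed (supp_plus_closed _) (@L_atom_supp _) Lw).
by apply: contra ac => aq; apply/mem_flatten_map; exists q.
Qed.

Lemma lmult_clause_supp c I w : lmult (L_clause c) I w -> supp (clause_symbols c) w.
Proof. exact: lmult_closed (supp_plus_closed _) (@L_clause_supp c) w. Qed.

Lemma L_dime_supp E w : L_dime E w -> supp (dime_symbols E) w.
Proof.
elim: E w => [|p E IHE] w /=; first by move=> -> a _; rewrite ffunE.
exact: lconc_supp (@lmult_clause_supp p.1 p.2) IHE w.
Qed.

Section Clause.
Variable c : clause Sigma.
Hypothesis okc : forall q, List.In q c -> forall q', List.In q' q.1 -> qm_or_one q'.2.
Hypothesis uc : uniq (clause_symbols c).

Let uniq_atom q : List.In q c -> uniq (atom_symbols q.1).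
Proof. exact: uniq_flatten_map_in uc. Qed.

(* Letters of distinct atoms are distinct, so one letter of [w] fixes its atom. *)
Lemma L_clause_atom q a w : List.In q c -> a \in atom_symbols q.1 ->
  L_clause c w -> w a <> 0 -> exists2 i, in_interval q.2 i & atom_power q.1 i w.
Proof.
move=> cq aq [r cr Lw] wa.
have ar : a \in atom_symbols r.1.
  by apply: contraT => /(lmult_closed (supp_plus_closed _) (@L_atom_supp _) Lw).
rewrite (uniq_flatten_map_inj uc cq cr aq ar).
case/(lmult_atomP _ _ (okc cr) (uniq_atom cr)): Lw => [//|[_ w_eps]].
by move: wa; rewrite w_eps ffunE.
Qed.

Lemma lmult_clause_required_le I q q' a w : List.In q c -> List.In q' q.1 ->
  q'.2 = mult_one -> a \in atom_symbols q.1 -> lmult (L_clause c) I w -> w a <= w q'.1.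
Proof.
move=> cq qq' q'1 aq; apply: (@lmult_closed (fun u => u a <= u q'.1)) => [|u Lu].
  by split=> [|w1 w2]; rewrite !ffunE //; apply: leq_add.
case: (eqVneq (u a) 0) => [-> //|/eqP ua].
have [i _ [Su bu]] := L_clause_atom cq aq Lu ua.
by rewrite (bu q' qq').2 //; apply: atom_power_le (conj Su bu) aq.
Qed.

Section SimpleClause.
Hypothesis simple_c : forall q, List.In q c -> qm_or_one q.2.

Lemma lpow_clause_bounded l w : (forall q, List.In q l -> List.In q c) ->
  uniq (clause_symbols l) -> supp (clause_symbols l) w ->
  (forall q q', List.In q l -> List.In q' q.1 -> q'.2 = mult_one ->
     forall a, a \in atom_symbols q.1 -> w a <= w q'.1) ->
  exists i, lpow (L_clause c) i w.
Proof.
elim: l w => [|q l IHl] w lc ul Sw bw.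
  by exists 0; apply/ffunP=> a; rewrite ffunE Sw.
have [cq {}lc] : List.In q c /\ forall r, List.In r l -> List.In r c.
  by split=> [|r lr]; apply: lc; [left | right].
have csq : clause_symbols (q :: l) = atom_symbols q.1 ++ clause_symbols l by [].
rewrite csq in ul Sw; have disj := uniq_cat_disjoint ul.
move: ul; rewrite cat_uniq => /and3P[_ _ ul].
rewrite (restr_split disj Sw).
have [i Li] : exists i, lpow (L_clause c) i (restr (clause_symbols l) w).
  apply: IHl => // [|r q' lr rq' q'1 a ar]; first exact: restr_supp.
  have in_l b : b \in atom_symbols r.1 -> b \in clause_symbols l.
    by move=> br; apply/mem_flatten_map; exists r.
  by rewrite !restrE ?in_l ?mem_atom_symbols //; exact: bw (or_intror lr) rq' q'1 a ar.
set u := restr (atom_symbols q.1) w.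
have [k Lk] : exists k, lpow (L_clause c) k u.
  exists (maxn 0 (\max_(a <- atom_symbols q.1) u a)).
  apply: (lpow_mono (L := L_atom q.1)) => [v Lv|].
    by exists q => //; apply: mem_lmult_qm_or_one (simple_c cq) Lv.
  apply/(lpow_atomP _ _ (okc cq) (uniq_atom cq)).
  apply: atom_power_max => [|q' qq' q'1]; first exact: restr_supp.
  rewrite /u restrE ?mem_atom_symbols //; split=> // a aq.
  by rewrite restrE //; exact: bw (or_introl erefl) qq' q'1 a aq.
by exists (k + i); apply: lpow_add.
Qed.

Lemma delta_sat_lmult_clause_iter I w : I = mult_plus \/ I = mult_star ->
  delta_sat (lmult (L_clause c) I) w -> lmult (L_clause c) I w.
Proof.
move=> I_iter sat_w; have [w_eps|w_neq] := classic (w = eps).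
  by rewrite w_eps in sat_w *; apply: delta_sat_eps (@lmult_clause_supp c I) sat_w.
have [i Li] : exists i, lpow (L_clause c) i w.
  apply: (lpow_clause_bounded (l := c)) => //.
    exact: (delta_sat_supp (@lmult_clause_supp c I)).
  move=> q q' cq qq' q'1 a aq; case: sat_w => _ _ _; apply.
  by move=> u; apply: lmult_clause_required_le cq qq' q'1 aq.
have i_gt0 : 0 < i by case: i Li => // /= w_eps; case: w_neq.
by left; exists i; case: I_iter => ->.
Qed.

End SimpleClause.

Section OptionalClause.
Variable I : interval.
Hypothesis I_opt : qm_or_one I.
Hypothesis wf_c : forall q, List.In q c -> interval_wf q.2.
Local Notation L := (lmult (L_clause c) I).

Let L_atom_power q a w : List.In q c -> a \in atom_symbols q.1 -> L w -> w a <> 0 ->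
  exists2 i, in_interval q.2 i & atom_power q.1 i w.
Proof.
move=> cq aq /(lmult_qm_or_one_eps I_opt) [->|Lw]; last exact: L_clause_atom.
by rewrite ffunE.
Qed.

Lemma delta_sat_lmult_clause_atom_supp q a w : List.In q c -> a \in atom_symbols q.1 ->
  delta_sat L w -> w a <> 0 -> supp (atom_symbols q.1) w.
Proof.
move=> cq aq [_ Cw _ _] wa b bq; apply: NNPP => wb; apply: (Cw a b) => //.
move=> [u [Lu [ua ub]]]; have [i _ [Su _]] := L_atom_power cq aq Lu ua.
by apply: ub; apply: Su.
Qed.

Lemma delta_sat_lmult_clause_atom_power q a w : List.In q c -> a \in atom_symbols q.1 ->
  delta_sat L w -> w a <> 0 ->
  exists2 i, in_interval q.2 i & atom_power q.1 i w.
Proof.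
move=> cq aq sat_w wa; have Sw := delta_sat_lmult_clause_atom_supp cq aq sat_w wa.
have [Nw _ _ Kw] := sat_w.
have req_ge q' b : List.In q' q.1 -> q'.2 = mult_one -> b \in atom_symbols q.1 ->
    w b <= w q'.1.
  by move=> qq' q'1 bq; apply: Kw => u; exact: lmult_clause_required_le cq qq' q'1 bq.
have N_atom_power b : b \in atom_symbols q.1 -> w b <> 0 ->
    exists (u : word) i, [/\ u b = w b, in_interval q.2 i & atom_power q.1 i u].
  move=> bq wb; have [u [Lu ub]] := Nw b.
  by rewrite -ub in wb; have [i ? ?] := L_atom_power cq bq Lu wb; exists u, i.
exists (maxn (ilo q.2) (\max_(b <- atom_symbols q.1) w b)); last first.
  apply: atom_power_max => // q' qq' q'1; split=> [|b]; last exact: req_ge.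
  have q'a := req_ge _ _ qq' q'1 aq.
  have [|u [i [u1 [lo _] [_ bu]]]] := N_atom_power _ (mem_atom_symbols qq'); first lia.
  by rewrite -u1 (bu q' qq').2.
split=> [|]; first by rewrite leq_maxl.
have := wf_c cq; rewrite /interval_wf; case E: (ihi q.2) => [m|] // lo_m.
rewrite geq_max lo_m; apply/bigmax_leqP_seq => b bq _.
have [->//|/eqP wb] := eqVneq (w b) 0.
have [u [i [<- [_ i_m] Au]]] := N_atom_power b bq wb; rewrite E in i_m.
exact: leq_trans (atom_power_le Au bq) i_m.
Qed.

Lemma delta_sat_lmult_clause_opt w : delta_sat L w -> L w.
Proof.
move=> sat_w; have [w_eps|/neq_eps_letter [a wa]] := classic (w = eps).
  by rewrite w_eps in sat_w *; apply: delta_sat_eps (@lmult_clause_supp c I) sat_w.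
have /mem_flatten_map [q cq aq] : a \in clause_symbols c.
  by apply: contraT => /(delta_sat_supp (@lmult_clause_supp c I) sat_w).
have [i Ii Ai] := delta_sat_lmult_clause_atom_power cq aq sat_w wa.
apply: mem_lmult_qm_or_one I_opt _; exists q => //.
by apply/(lmult_atomP _ _ (okc cq) (uniq_atom cq)); left; exists i.
Qed.

End OptionalClause.
End Clause.

Lemma delta_sat_L_dime E w :
  (forall p, List.In p E -> forall w,
     delta_sat (lmult (L_clause p.1) p.2) w -> lmult (L_clause p.1) p.2 w) ->
  uniq (dime_symbols E) -> delta_sat (L_dime E) w -> L_dime E w.
Proof.
elim: E w => [|p E IHE] w satE uE sat_w.
  by case: sat_w => Nw _ _ _; apply/ffunP=> a; have [u [-> <-]] := Nw a.
have uE' : uniq (clause_symbols p.1 ++ dime_symbols E) := uE.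
apply: (delta_sat_lconc (@lmult_clause_supp p.1 p.2) (@L_dime_supp E)) sat_w.
- exact: uniq_cat_disjoint.
- by apply: satE; left.
- move=> u; apply: IHE => [q Eq|]; first by apply: satE; right.
  by move: uE'; rewrite cat_uniq => /and3P[].
Qed.

Lemma L_dimeP E w : is_dime E -> L_dime E w <-> delta_sat (L_dime E) w.
Proof.
move=> [_ [okE uE]]; split; first exact: delta_sat_mem.
apply: delta_sat_L_dime => // p Ep u.
have up : uniq (clause_symbols p.1).
  exact: (uniq_flatten_map_in (f := fun p => clause_symbols p.1) uE Ep).
have ok_p (D : clause Sigma) : clause_ok D ->
    forall q, List.In q D -> forall q', List.In q' q.1 -> qm_or_one q'.2.
  by move=> [_ okD] q Dq; case: (okD q Dq) => -[_ okq] _.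
case: (okE p Ep) => [[[okp simple_p] p_iter]|[okp p_opt]].
  exact: delta_sat_lmult_clause_iter (ok_p _ okp) up simple_p _ _ p_iter.
apply: (delta_sat_lmult_clause_opt (ok_p _ okp) up) => [|q pq].
  by case: p_opt; [right | left].
by case: okp => _ /(_ q pq) [].
Qed.

Lemma same_lang_same_delta (E E' : dime Sigma) : same_lang E E' -> same_delta E E'.
Proof.
move=> EE'; split; last split; last split.
- by move=> a b; split=> C [w [/EE' Lw ab]]; apply: C; exists w.
- by move=> a n; split=> -[w [/EE' Lw wa]]; exists w.
- by move=> X; split=> P w /EE' Lw; apply: P.
- by move=> a b; split=> K w /EE' Lw; apply: K.
Qed.

Lemma same_delta_sym (E E' : dime Sigma) : same_delta E E' -> same_delta E' E.
Proof.
move=> [C [N [P K]]]; split; last split; last split.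
- by move=> a b; rewrite C.
- by move=> a n; rewrite N.
- by move=> X; rewrite P.
- by move=> a b; rewrite K.
Qed.

Lemma delta_sat_same_delta (E E' : dime Sigma) w :
  same_delta E E' -> delta_sat (L_dime E) w -> delta_sat (L_dime E') w.
Proof.
move=> [C [N [P K]]] [Nw Cw Pw Kw]; split=> [a|a b CLab|X PLX|a b KLab].
- exact: (N a (w a)).1 (Nw a).
- exact: Cw ((C a b).2 CLab).
- exact: Pw ((P X).2 PLX).
- exact: Kw ((K a b).2 KLab).
Qed.

End Languages.

Theorem corollary1 (Sigma : finType) (E E' : dime Sigma) :
  is_dime E -> is_dime E' -> (same_lang E E' <-> same_delta E E').
Proof.
move=> dimeE dimeE'; split=> [|EE' w]; first exact: same_lang_same_delta.
rewrite (L_dimeP w dimeE) (L_dimeP w dimeE').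
by split; apply: delta_sat_same_delta => //; apply: same_delta_sym.
Qed.
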